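(* Let $A$ be a free finitely generated abelian group endowed with a structure of commutative ring, and let $\chi\colon A\to\mathbb{Z}$ be a linear map such that the symmetric pairing $\langle x,y\rangle:=\chi(x\cdot y)$ on $A$ is unimodular. Let $A=F^0A\supset F^1A\supset\ldots\supset F^dA\supset F^{d+1}A=0$ be a decreasing filtration with $F^iA\cdot F^jA\subset F^{i+j}A$ for all $i,j\geqslant0$, and assume $\mathrm{rk}(\mathrm{gr}^i_FA)=\mathrm{rk}(\mathrm{gr}^{d-i}_FA)$ for each $0\leqslant i\leqslant d$. Suppose the filtration splits, i.e. for each $i$, $0\leqslant i\leqslant d$, the quotient $A/F^iA$ is torsion-free. Then for each $i$, $0\leqslant i\leqslant d$, the induced pairing between free finitely generated abelian groups $\langle\cdot,\cdot\rangle_i\colon\mathrm{gr}^i_FA\otimes\mathrm{gr}^{d-i}_FA\to\mathbb{Z}$ is unimodular.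
   Context: $\mathrm{gr}^i_FA=F^iA/F^{i+1}A$. The pairing $\langle\cdot,\cdot\rangle_i$ is induced by $\langle\cdot,\cdot\rangle$, which is well defined on these quotients since $\langle F^iA,F^jA\rangle=0$ when $i+j\geqslant d+1$. *)

From HB Require Import structures.
From mathcomp Require Import all_boot all_order all_algebra.
Set Implicit Arguments. Unset Strict Implicit. Unset Printing Implicit Defensive.
Import Order.TTheory GRing.Theory Num.Theory.
Local Open Scope ring_scope.

Definition free_fg (A : zmodType) : Prop :=
  exists (n : nat) (e : 'I_n -> A),
    forall x : A, exists! c : {ffun 'I_n -> int}, x = \sum_(j < n) e j *~ c j.

Definition is_subgroup (A : zmodType) (U : A -> Prop) : Prop :=
  U 0 /\ forall x y, U x -> U y -> U (x - y).

(* Given subgroups U' <= U and V' <= V of A and a Z-bilinear b on A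
   (with b(U,V') = 0 = b(U',V)), [perfect_on b U U' V V'] says that the pairing
   induced by b on (U/U') x (V/V') -> Z is unimodular, i.e. both induced maps
   U/U' -> Hom(V/V',Z) and V/V' -> Hom(U/U',Z) are bijective.
   An element of Hom(V/V', Z) is an additive map on V vanishing on V'. *)
Definition perfect_on (A : zmodType) (b : A -> A -> int)
    (U U' V V' : A -> Prop) : Prop :=
  [/\
      (forall phi : A -> int,
         (forall y z, V y -> V z -> phi (y - z) = phi y - phi z) ->
         (forall y, V' y -> phi y = 0) ->
         exists x, U x /\ forall y, V y -> b x y = phi y),
      (forall x, U x -> (forall y, V y -> b x y = 0) -> U' x),
      (forall phi : A -> int,
         (forall x z, U x -> U z -> phi (x - z) = phi x - phi z) ->
         (forall x, U' x -> phi x = 0) ->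
         exists y, V y /\ forall x, U x -> b x y = phi x)
    &
      (forall y, V y -> (forall x, U x -> b x y = 0) -> V' y)].

Definition indep_mod (A : zmodType) (U U' : A -> Prop) (k : nat)
    (x : 'I_k -> A) : Prop :=
  (forall j, U (x j)) /\
  forall c : 'I_k -> int, U' (\sum_(j < k) x j *~ c j) -> forall j, c j = 0.

Definition quot_rank (A : zmodType) (U U' : A -> Prop) (r : nat) : Prop :=
  (exists x : 'I_r -> A, indep_mod U U' x) /\
  forall (k : nat) (x : 'I_k -> A), indep_mod U U' x -> (k <= r)%N.

From HB Require Import structures.
From mathcomp Require Import all_boot all_order all_algebra zify.
From Stdlib Require Import Classical.
Set Implicit Arguments. Unset Strict Implicit. Unset Printing Implicit Defensive.
Import Order.TTheory GRing.Theory Num.Theory.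
Local Open Scope ring_scope.

(* Identify A with Z^n and measure a subgroup by the dimension of its rational
   span.  By multiplicativity F^l is orthogonal to F^k when k + l = d + 1.
   Unimodularity of chi bounds rank U + rank U^perp by n for a saturated U
   (pair a basis of A adapted to U with its dual basis), while the rank
   symmetry of the graded pieces gives rank F^k + rank F^l = n by induction on
   k; as F^l is saturated, (F^k)^perp = F^l.  Now a homomorphism
   gr^(d-i) -> Z extends from the direct summand F^(d-i) to A, is represented
   through chi by some x, and x lies in (F^(d-i+1))^perp = F^i; injectivity
   is (F^(d-i))^perp = F^(i+1).  The other half is symmetric. *)

Section Subgroup.
Variables (A : zmodType) (U : A -> Prop).
Hypothesis subU : is_subgroup U.

Lemma subgroup0 : U 0. Proof. by case: subU. Qed.

Lemma subgroupB x y : U x -> U y -> U (x - y). Proof. by case: subU => _; apply. Qed.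

Lemma subgroupN x : U x -> U (- x).
Proof. by move=> Ux; rewrite -sub0r; apply: subgroupB => //; apply: subgroup0. Qed.

Lemma subgroupD x y : U x -> U y -> U (x + y).
Proof. by move=> Ux Uy; rewrite -[y]opprK; apply: subgroupB => //; apply: subgroupN. Qed.

Lemma subgroupMn x k : U x -> U (x *+ k).
Proof.
move=> Ux; elim: k => [|k IH]; first by rewrite mulr0n; apply: subgroup0.
by rewrite mulrS; apply: subgroupD.
Qed.

Lemma subgroupMz x z : U x -> U (x *~ z).
Proof.
move=> Ux; case: z => k; rewrite ?NegzE ?mulrNz; first exact: subgroupMn.
exact/subgroupN/subgroupMn.
Qed.

Lemma subgroup_sum (I : Type) (r : seq I) (P : pred I) (f : I -> A) :
  (forall i, P i -> U (f i)) -> U (\sum_(i <- r | P i) f i).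
Proof. by move=> Uf; apply: big_ind => //; [apply: subgroup0 | apply: subgroupD]. Qed.

Definition additive_on (phi : A -> int) :=
  forall x y, U x -> U y -> phi (x - y) = phi x - phi y.

Variable phi : A -> int.
Hypothesis phiB : additive_on phi.

Lemma additive_on0 : phi 0 = 0.
Proof. by have := phiB subgroup0 subgroup0; rewrite !subrr. Qed.

Lemma additive_onN x : U x -> phi (- x) = - phi x.
Proof.
by move=> Ux; rewrite -sub0r phiB ?additive_on0 ?sub0r //; apply: subgroup0.
Qed.

Lemma additive_onD x y : U x -> U y -> phi (x + y) = phi x + phi y.
Proof.
move=> Ux Uy; have U_y := subgroupN Uy.
by rewrite -{1}[y]opprK phiB // additive_onN // opprK.
Qed.

Lemma additive_onMz x z : U x -> phi (x *~ z) = phi x * z.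
Proof.
move=> Ux; have phiMn k : phi (x *+ k) = phi x *+ k.
  elim: k => [|k IH]; first by rewrite !mulr0n additive_on0.
  by rewrite !mulrS additive_onD ?IH //; apply: subgroupMn.
case: z => k; first by rewrite phiMn -mulr_natr natz.
rewrite NegzE mulrNz additive_onN ?phiMn; last exact: subgroupMn.
by rewrite mulrN -mulr_natr natz.
Qed.

Lemma additive_on_sum (I : Type) (r : seq I) (P : pred I) (f : I -> A) :
  (forall i, P i -> U (f i)) ->
  phi (\sum_(i <- r | P i) f i) = \sum_(i <- r | P i) phi (f i).
Proof.
move=> Uf; suff [] : U (\sum_(i <- r | P i) f i) /\
    phi (\sum_(i <- r | P i) f i) = \sum_(i <- r | P i) phi (f i) by [].
apply: (big_rec2 (fun s t => U s /\ phi s = t)).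
  by rewrite additive_on0; split => //; apply: subgroup0.
by move=> i s t Pi [Us <-]; split; [apply: subgroupD | rewrite additive_onD]; auto.
Qed.

End Subgroup.

Definition saturated (A : zmodType) (U : A -> Prop) :=
  forall (N : nat) x, (0 < N)%N -> U (x *+ N) -> U x.

Lemma saturatedMz (A : zmodType) (U : A -> Prop) : is_subgroup U -> saturated U ->
  forall x z, z != 0 -> U (x *~ z) -> U x.
Proof.
move=> subU satU x [] k nz_k Uxk.
  by apply: (satU k) => //; rewrite lt0n; apply: contra nz_k => /eqP ->.
apply: (satU k.+1) => //; rewrite -[_ *+ _]opprK.
by move: Uxk; rewrite NegzE mulrNz; apply: subgroupN.
Qed.

Notation ratmx := (map_mx (intr : int -> rat)).

Lemma rat_row_clear_denominators q (w : 'rV[rat]_q) :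
  exists2 N : nat, (0 < N)%N & exists c : 'rV[int]_q, ratmx c = w *+ N.
Proof.
pose D (j : 'I_q) := absz (denq (w 0 j)).
exists (\prod_j D j); first by apply: prodn_gt0 => j; rewrite absz_gt0 denq_neq0.
exists (\row_j (numq (w 0 j) * (\prod_(k | k != j) D k)%:R)).
apply/rowP => j; rewrite !mxE mulmxnE [in RHS](bigD1 j) //= intrM numqE.
rewrite -(mulr_natr (w 0 j)) natrM mulrA /D.
have -> : ((absz (denq (w 0 j)))%:R : rat) = (denq (w 0 j))%:~R.
  by rewrite -[in RHS](absz_denq (w 0 j)).
by rewrite natz.
Qed.

Record coordinates (A : zmodType) (n : nat) := Coordinates {
  vec : 'rV[int]_n -> A;
  coord : A -> 'rV[int]_n;
  vecB : {morph vec : u v / u - v};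
  coordK : cancel coord vec;
  vecK : cancel vec coord }.

Lemma coordB (A : zmodType) n (C : coordinates A n) : {morph coord C : x y / x - y}.
Proof. by move=> x y; apply: (can_inj (vecK C)); rewrite vecB !coordK. Qed.

HB.instance Definition _ (A : zmodType) n (C : coordinates A n) :=
  GRing.isZmodMorphism.Build _ _ (vec C) (@vecB A n C).
HB.instance Definition _ (A : zmodType) n (C : coordinates A n) :=
  GRing.isZmodMorphism.Build _ _ (coord C) (@coordB A n C).

Definition qcoord (A : zmodType) n (C : coordinates A n) (x : A) : 'rV[rat]_n :=
  ratmx (coord C x).

Lemma qcoordB (A : zmodType) n (C : coordinates A n) : {morph qcoord C : x y / x - y}.
Proof. by move=> x y; rewrite /qcoord raddfB map_mxB. Qed.

HB.instance Definition _ (A : zmodType) n (C : coordinates A n) :=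
  GRing.isZmodMorphism.Build _ _ (qcoord C) (@qcoordB A n C).

Lemma free_fg_coordinates (A : zmodType) : free_fg A -> exists n, inhabited (coordinates A n).
Proof.
move=> [n [e uniq_coord]]; exists n.
pose vec (c : 'rV[int]_n) : A := \sum_j e j *~ c 0 j.
have coordP x : exists c : {ffun 'I_n -> int}, x == \sum_j e j *~ c j.
  by have [c [-> _]] := uniq_coord x; exists c.
pose coord x : 'rV[int]_n := \row_j xchoose (coordP x) j.
have vecB : {morph vec : u v / u - v}.
  by move=> u v; rewrite /vec -sumrB; apply: eq_bigr => j _; rewrite !mxE mulrzBr.
have coordK : cancel coord vec.
  move=> x; rewrite [RHS](eqP (xchooseP (coordP x))).
  by apply: eq_bigr => j _; rewrite mxE.
have vecK : cancel vec coord.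
  move=> c; have [c0 [_ c0_uniq]] := uniq_coord (vec c).
  have choice_c0 : xchoose (coordP (vec c)) = c0.
    by apply/esym/c0_uniq/eqP; apply: xchooseP (coordP (vec c)).
  have c_c0 : [ffun j => c 0 j] = c0.
    by apply/esym/c0_uniq; apply: eq_bigr => j _; rewrite ffunE.
  by apply/rowP => j; rewrite !mxE choice_c0 -c_c0 ffunE.
by constructor; apply: (Coordinates vecB coordK vecK).
Qed.

Section Coordinates.
Variables (A : zmodType) (n : nat) (C : coordinates A n).

Lemma qcoord_inj : injective (qcoord C).
Proof.
move=> x y /matrixP qxy; apply: (can_inj (coordK C)); apply/matrixP => i j.
by apply: (@intr_inj rat); have := qxy i j; rewrite !mxE.
Qed.

Lemma qcoord_vec c : qcoord C (vec C c) = ratmx c.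
Proof. by rewrite /qcoord vecK. Qed.

Lemma vec_mulmx q (c : 'rV[int]_q) (M : 'M[int]_(q, n)) :
  vec C (c *m M) = \sum_i vec C (row i M) *~ c 0 i.
Proof.
rewrite mulmx_sum_row raddf_sum; apply: eq_bigr => i _.
by rewrite -{1}[c 0 i]intz scaler_int raddfMz.
Qed.

Lemma coord_invmx_expand (R : 'M[int]_n) x : R \in unitmx ->
  x = \sum_j vec C (row j R) *~ (coord C x *m invmx R) 0 j.
Proof. by move=> uR; rewrite -{1}(coordK C x) -{1}(mulmxKV uR (coord C x)) vec_mulmx. Qed.

Lemma torsion_free (x : A) N : (0 < N)%N -> x *+ N = 0 -> x = 0.
Proof.
move=> N_gt0 xN0; apply: qcoord_inj; rewrite raddf0.
have /eqP : qcoord C x *+ N = 0 by rewrite -raddfMn /= xN0 raddf0.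
by rewrite -scaler_nat scaler_eq0 pnatr_eq0 (negPf (lt0n_neq0 N_gt0)) => /eqP.
Qed.

Definition coord_mx k (x : 'I_k -> A) : 'M[int]_(k, n) := \matrix_(j, l) coord C (x j) 0 l.

Lemma row_coord_mx k (x : 'I_k -> A) j : row j (coord_mx x) = coord C (x j).
Proof. by apply/rowP => l; rewrite !mxE. Qed.

Lemma vec_coord_mx k (x : 'I_k -> A) (c : 'rV[int]_k) :
  vec C (c *m coord_mx x) = \sum_j x j *~ c 0 j.
Proof. by rewrite vec_mulmx; apply: eq_bigr => j _; rewrite row_coord_mx coordK. Qed.

Lemma ratmx_supported_sub (B : 'M[int]_n) (P : pred 'I_n) (c : 'rV[int]_n) :
  (forall j, ~~ P j -> c 0 j = 0) ->
  (ratmx (c *m B) <= diag_mx (\row_j (P j)%:R) *m ratmx B)%MS.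
Proof.
move=> c_supp; rewrite map_mxM.
have -> : ratmx c = ratmx c *m diag_mx (\row_j (P j)%:R).
  apply/rowP => j; rewrite mul_mx_diag !mxE.
  by case: (boolP (P j)) => [_|/c_supp ->]; rewrite ?mulr1 ?mul0r.
by rewrite -mulmxA submxMl.
Qed.

Definition spans (U : A -> Prop) q (M : 'M[int]_(q, n)) :=
  (forall i, U (vec C (row i M))) /\ (forall x, U x -> (qcoord C x <= ratmx M)%MS).

Lemma spans_exists (U : A -> Prop) : exists q (M : 'M[int]_(q, n)), spans U M.
Proof.
suff grow t q (M : 'M[int]_(q, n)) : (forall i, U (vec C (row i M))) ->
    (n - \rank (ratmx M) <= t)%N -> exists q (M : 'M[int]_(q, n)), spans U M.
  by apply: (grow n 0%N 0) => [[]|]; rewrite ?leq_subr.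
elim: t q M => [|t IH] q M UM rankM.
  exists q, M; split => // x _; apply: submx_full.
  by rewrite /row_full eqn_leq rank_leq_col -subn_eq0 -leqn0.
case: (classic (exists2 x, U x & ~~ (qcoord C x <= ratmx M)%MS)); last first.
  move=> spanM; exists q, M; split => // x Ux.
  by apply/negPn/negP => notin; apply: spanM; exists x.
move=> [x Ux notin]; apply: (IH _ (col_mx M (coord C x))).
  move=> i; rewrite -[i]splitK; case: (split i) => k /=; first by rewrite rowKu.
  rewrite rowKd (_ : row k _ = coord C x) ?coordK //.
  by apply/rowP => j; rewrite mxE [k]ord1.
have sub_col : (ratmx M <= col_mx (ratmx M) (qcoord C x))%MS.
  by rewrite -addsmxE addsmxSl.
have : (\rank (ratmx M) < \rank (ratmx (col_mx M (coord C x))))%N.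
  by rewrite map_col_mx (ltn_leqif (mxrank_leqif_sup sub_col)) col_mx_sub (negPf notin) andbF.
have := rank_leq_col (ratmx (col_mx M (coord C x))).
lia.
Qed.

Lemma spans_sub (U V : A -> Prop) q q' (M : 'M[int]_(q, n)) (M' : 'M[int]_(q', n)) :
  (forall x, U x -> V x) -> spans U M -> spans V M' -> (ratmx M <= ratmx M')%MS.
Proof.
move=> sUV [UM _] [_ spanM']; apply/row_subP => i.
by rewrite -map_row -qcoord_vec; apply/spanM'/sUV.
Qed.

Lemma saturated_span_mem (U : A -> Prop) q (M : 'M[int]_(q, n)) x :
  is_subgroup U -> saturated U -> (forall i, U (vec C (row i M))) ->
  (qcoord C x <= ratmx M)%MS -> U x.
Proof.
move=> subU satU UM /submxP [w Ew].
have [N N_gt0 [c Ec]] := rat_row_clear_denominators w.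
apply: (satU N) => //.
have -> : x *+ N = vec C (c *m M).
  apply: qcoord_inj; rewrite qcoord_vec map_mxM Ec raddfMn /= Ew.
  by rewrite -!scaler_nat scalemxAl.
by rewrite vec_mulmx; apply: (subgroup_sum subU) => i _; apply: (subgroupMz subU).
Qed.

(* Smith normal form M = L D R: the rows of R with a nonzero invariant factor
   span U over Q, and saturation puts them in U itself. *)
Lemma saturated_adapted_basis (U : A -> Prop) : is_subgroup U -> saturated U ->
  exists (R : 'M[int]_n) (P : pred 'I_n), [/\ R \in unitmx,
    forall j, P j -> U (vec C (row j R)) &
    forall x, U x -> forall j, ~~ P j -> (coord C x *m invmx R) 0 j = 0].
Proof.
move=> subU satU; have [q [M [UM spanM]]] := spans_exists U.
have [L uL [R uR [s _ EM]]] := int_Smith_normal_form M.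
set D := \matrix_(i, j) _ in EM.
exists R, (fun j : 'I_n => (j < q)%N && (s`_j != 0)); split => //.
- move=> j /andP [jq nz_sj]; pose i := Ordinal jq.
  apply: (saturatedMz subU satU nz_sj).
  have rowLM : row i (invmx L) *m M = row j R *~ s`_j.
    rewrite -row_mul EM -!mulmxA mulKmx // row_mul mulmx_sum_row (bigD1 j) //=.
    rewrite big1 ?addr0 => [|k kj]; rewrite !mxE.
      by rewrite eqxx mulr1n -{1}[s`_j]intz scaler_int.
    have -> : (i == k :> nat) = false by apply/negbTE; rewrite eq_sym.
    by rewrite mulr0n scale0r.
  have -> : vec C (row j R) *~ s`_j = vec C (row i (invmx L) *m M).
    by rewrite rowLM raddfMz.
  rewrite vec_mulmx; apply: (subgroup_sum subU) => k _.
  exact/(subgroupMz subU)/UM.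
- move=> x Ux j notPj; have /submxP [w Ew] := spanM x Ux.
  apply: (@intr_inj rat); rewrite mulr0z.
  have RRV : ratmx R *m ratmx (invmx R) = 1%:M by rewrite -map_mxM mulmxV ?map_mx1.
  have : ratmx (coord C x *m invmx R) = w *m ratmx L *m ratmx D.
    by rewrite map_mxM -/(qcoord C x) Ew EM !map_mxM -!mulmxA RRV mulmx1.
  move/(congr1 (fun X : 'rV_n => X 0 j)); rewrite !mxE => ->.
  apply: big1 => k _; rewrite !mxE.
  case: eqP => [kj|]; last by rewrite mulr0n mulr0z mulr0.
  by move: notPj; rewrite -kj ltn_ord /= negbK => /eqP ->; rewrite mul0rn mulr0z mulr0.
Qed.

Lemma saturated_additive_extend (U : A -> Prop) (phi : A -> int) :
  is_subgroup U -> saturated U -> additive_on U phi ->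
  exists2 psi : A -> int, {morph psi : x y / x - y} & forall x, U x -> psi x = phi x.
Proof.
move=> subU satU phiB; have [R [P [uR PU notPU]]] := saturated_adapted_basis subU satU.
pose c x j := (coord C x *m invmx R) 0 j.
exists (fun x => \sum_(j | P j) c x j * phi (vec C (row j R))).
  move=> x y; rewrite -sumrB; apply: eq_bigr => j _.
  by rewrite /c raddfB mulmxBl !mxE mulrBl.
move=> x Ux; have Ex : x = \sum_(j | P j) vec C (row j R) *~ c x j.
  rewrite {1}(coord_invmx_expand x uR) (bigID P) /= [X in _ + X]big1 ?addr0 //.
  by move=> j /(notPU x Ux) ->; rewrite mulr0z.
rewrite {2}Ex (additive_on_sum subU phiB); last by move=> j Pj; apply/(subgroupMz subU)/PU.
by apply: eq_bigr => j Pj; rewrite (additive_onMz subU phiB _ (PU j Pj)) mulrC.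
Qed.

Lemma saturated_spans_eq (V W : A -> Prop) q q' (M : 'M[int]_(q, n)) (M' : 'M[int]_(q', n)) :
  is_subgroup V -> saturated V -> (forall x, V x -> W x) -> spans V M -> spans W M' ->
  (\rank (ratmx M') <= \rank (ratmx M))%N -> forall x, W x -> V x.
Proof.
move=> subV satV sVW spanV spanW rankM' x Wx.
have sMM' := spans_sub sVW spanV spanW.
have sM'M : (ratmx M' <= ratmx M)%MS.
  by rewrite -(mxrank_leqif_sup sMM').2 eqn_leq rankM' mxrankS.
apply: (saturated_span_mem subV satV spanV.1).
exact: submx_trans (spanW.2 x Wx) sM'M.
Qed.

Lemma indep_mod_rat (U U' : A -> Prop) q' (M' : 'M[int]_(q', n)) r (x : 'I_r -> A) :
  is_subgroup U' -> saturated U' -> (forall i, U' (vec C (row i M'))) ->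
  indep_mod U U' x ->
  forall w : 'rV[rat]_r, (w *m ratmx (coord_mx x) <= ratmx M')%MS -> w = 0.
Proof.
move=> subU' satU' U'M' [_ indx] w wM'.
have [N N_gt0 [c Ec]] := rat_row_clear_denominators w.
have /indx c0 : U' (\sum_j x j *~ c 0 j).
  rewrite -vec_coord_mx; apply: (saturated_span_mem subU' satU' U'M').
  by rewrite qcoord_vec map_mxM Ec -scaler_nat -scalemxAl scalemx_sub.
have /eqP : w *+ N = 0 by rewrite -Ec; apply/rowP => j; rewrite !mxE c0.
by rewrite -scaler_nat scaler_eq0 pnatr_eq0 (negPf (lt0n_neq0 N_gt0)) => /eqP.
Qed.

Lemma indep_mod_extend (U U' : A -> Prop) q' (M' : 'M[int]_(q', n)) r (x : 'I_r -> A) u :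
  (forall y, U' y -> (qcoord C y <= ratmx M')%MS) -> indep_mod U U' x -> U u ->
  ~~ (qcoord C u <= ratmx (coord_mx x) + ratmx M')%MS ->
  indep_mod U U' (fun j : 'I_r.+1 => if unlift ord_max j is Some k then x k else u).
Proof.
move=> spanM' [Ux indx] Uu notin; split.
  by move=> j; case: unliftP => [k|] _; [apply: Ux | apply: Uu].
move=> c; set c' := \row_k c (lift ord_max k).
have -> : \sum_(j < r.+1) (if unlift ord_max j is Some k then x k else u) *~ c j =
    vec C (c' *m coord_mx x) + u *~ c ord_max.
  rewrite big_ord_recr /= unlift_none vec_coord_mx; congr (_ + _).
  apply: eq_bigr => k _; rewrite mxE.
  have -> : widen_ord (leqnSn r) k = lift ord_max k by apply: val_inj; rewrite [RHS]lift_max.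
  by rewrite liftK.
move=> U'c; have c_max : c ord_max = 0.
  apply/eqP; apply: contraNT notin => nz_c.
  have := spanM' _ U'c; rewrite raddfD /= raddfMz qcoord_vec map_mxM => sum_in.
  have : (qcoord C u *~ c ord_max <= ratmx (coord_mx x) + ratmx M')%MS.
    rewrite -[_ *~ _](addKr (ratmx c' *m ratmx (coord_mx x))).
    apply: addmx_sub; last exact: submx_trans sum_in (addsmxSr _ _).
    by rewrite -scaleN1r scalemx_sub // (submx_trans (submxMl _ _)) ?addsmxSl.
  rewrite -scaler_int => /(scalemx_sub ((c ord_max)%:~R)^-1).
  by rewrite scalerA mulVf ?intr_eq0 // scale1r.
move: U'c; rewrite c_max mulr0z addr0 vec_coord_mx => /indx c'0 j.
by case: (unliftP ord_max j) => [k|] ->; [have := c'0 k; rewrite mxE | apply: c_max].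
Qed.

Lemma quot_rank_spans (U U' : A -> Prop) q q' (M : 'M[int]_(q, n)) (M' : 'M[int]_(q', n)) r :
  is_subgroup U' -> saturated U' -> (forall x, U' x -> U x) ->
  spans U M -> spans U' M' -> quot_rank U U' r ->
  (r + \rank (ratmx M'))%N = \rank (ratmx M).
Proof.
move=> subU' satU' sU'U spanM spanM' [[x indx] max_r].
set X := ratmx (coord_mx x).
have freeX := indep_mod_rat subU' satU' spanM'.1 indx.
have rankX : \rank X = r.
  apply/eqP; rewrite -[_ == _]/(row_free X) -kermx_eq0.
  by apply/rowV0P => v /sub_kermxP vX; apply: freeX; rewrite vX sub0mx.
have disjX : (X :&: ratmx M')%MS = 0.
  apply/eqP/rowV0P => v; rewrite sub_capmx => /andP [/submxP [w ->] wM'].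
  by rewrite (freeX w wM') mul0mx.
have sXM : (X + ratmx M' <= ratmx M)%MS.
  rewrite addsmx_sub (spans_sub sU'U spanM' spanM) andbT.
  by apply/row_subP => j; rewrite -map_row row_coord_mx; apply: spanM.2; apply: indx.1.
have sMX : (ratmx M <= X + ratmx M')%MS.
  apply/row_subP => i; rewrite -map_row -qcoord_vec; apply/idPn => notin.
  by have := max_r _ _ (indep_mod_extend spanM'.2 indx (spanM.1 i) notin); rewrite ltnn.
apply/eqP; rewrite -rankX -(mxrank_disjoint_sum disjX).
by rewrite eqn_leq (mxrankS sXM) (mxrankS sMX).
Qed.

Lemma spans_full_rank (U : A -> Prop) q (M : 'M[int]_(q, n)) :
  (forall x, U x) -> spans U M -> \rank (ratmx M) = n.
Proof.
move=> UT [_ spanM]; apply/eqP; rewrite -[_ == _]/(row_full _) -sub1mx.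
apply/row_subP => j; rewrite row1.
by rewrite -(map_delta_mx intr) -qcoord_vec; apply: spanM.
Qed.

Lemma spans_zero_rank (U : A -> Prop) q (M : 'M[int]_(q, n)) :
  (forall x, U x -> x = 0) -> spans U M -> \rank (ratmx M) = 0%N.
Proof.
move=> U0 [UM _]; apply/eqP; rewrite mxrank_eq0; apply/eqP/row_matrixP => i.
by rewrite row0 -map_row -qcoord_vec (U0 _ (UM i)) raddf0.
Qed.

End Coordinates.

Section Duality.
Variables (A : comPzRingType) (n : nat) (C : coordinates A n) (chi : A -> int).
Hypothesis chiD : {morph chi : x y / x + y}.
Hypothesis chi_unimodular : perfect_on (fun x y => chi (x * y))
  (fun _ => True) (fun x => x = 0) (fun _ => True) (fun x => x = 0).

Lemma chiB : {morph chi : x y / x - y}.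
Proof. by move=> x y; apply/eqP; rewrite eq_sym subr_eq -chiD subrK. Qed.

HB.instance Definition _ := GRing.isZmodMorphism.Build _ _ chi chiB.

Lemma chi_nondegenerate y : (forall x, chi (x * y) = 0) -> y = 0.
Proof. by case: chi_unimodular => _ _ _ inj y0; apply: inj => // x _; apply: y0. Qed.

Lemma chi_represent (phi : A -> int) :
  {morph phi : x y / x - y} -> exists y, forall x, chi (x * y) = phi x.
Proof.
case: chi_unimodular => _ _ surj _ phiB.
have [|y [_ Hy]] := surj phi (fun x z _ _ => phiB x z).
  by move=> x ->; rewrite -(subrr 0) phiB subrr.
by exists y => x; apply: Hy.
Qed.

Definition perp (U : A -> Prop) y := forall u, U u -> chi (u * y) = 0.

Lemma dual_basis (R : 'M[int]_n) :
  exists y : 'I_n -> A, forall j x, chi (x * y j) = (coord C x *m invmx R) 0 j.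
Proof.
suff /fin_all_exists [y Hy] j : exists yj, forall x, chi (x * yj) = (coord C x *m invmx R) 0 j.
  by exists y.
by apply: chi_represent => x z; rewrite raddfB mulmxBl !mxE.
Qed.

Lemma dual_basis_expand (R : 'M[int]_n) (y : 'I_n -> A) : R \in unitmx ->
  (forall j x, chi (x * y j) = (coord C x *m invmx R) 0 j) ->
  forall w, w = \sum_j y j *~ chi (vec C (row j R) * w).
Proof.
move=> uR dualy w; apply/eqP; rewrite -subr_eq0; apply/eqP; apply: chi_nondegenerate => x.
rewrite mulrBr raddfB /= mulr_sumr raddf_sum /= {1}(coord_invmx_expand C x uR).
rewrite mulr_suml raddf_sum /=; apply/eqP; rewrite subr_eq0; apply/eqP.
by apply: eq_bigr => j _; rewrite mulrzAl mulrzAr !raddfMz /= dualy !mulrzz mulrC.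
Qed.

(* With r_j the rows of a basis adapted to U and y_j the dual basis, the rows
   of M use only the r_j in U and the rows of W only the y_j outside U. *)
Lemma perp_rank_le (U : A -> Prop) q q' (M : 'M[int]_(q, n)) (W : 'M[int]_(q', n)) :
  is_subgroup U -> saturated U ->
  (forall i, U (vec C (row i M))) -> (forall i, perp U (vec C (row i W))) ->
  (\rank (ratmx M) + \rank (ratmx W) <= n)%N.
Proof.
move=> subU satU UM WU.
have [R [P [uR PU notPU]]] := saturated_adapted_basis C subU satU.
have [y dualy] := dual_basis R.
have sM : (ratmx M <= diag_mx (\row_j (P j)%:R) *m ratmx R)%MS.
  apply/row_subP => i; rewrite -map_row -(vecK C (row i M)).
  rewrite -(mulmxKV uR (coord C _)); apply: ratmx_supported_sub => j.
  exact: notPU (UM i) j.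
have sW : (ratmx W <= diag_mx (\row_j (~~ P j)%:R) *m ratmx (coord_mx C y))%MS.
  apply/row_subP => i; rewrite -map_row -(vecK C (row i W)).
  set w := vec C (row i W).
  have -> : coord C w = (\row_j chi (vec C (row j R) * w)) *m coord_mx C y.
    apply: (can_inj (vecK C)); rewrite coordK vec_coord_mx {1}(dual_basis_expand uR dualy w).
    by apply: eq_bigr => j _; rewrite mxE.
  apply: ratmx_supported_sub => j; rewrite negbK mxE => Pj.
  exact/(WU i)/PU.
have disj_supp : diag_mx (\row_j (P j)%:R) *m diag_mx (\row_j (~~ P j)%:R) = 0 :> 'M[rat]_n.
  rewrite mulmx_diag; apply/matrixP => i j; rewrite !mxE.
  by case: (P i); rewrite ?mulr0 ?mul0r ?mul0rn.
have := mulmx0_rank_max disj_supp.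
have := leq_trans (mxrankS sM) (mxrankM_maxl _ _).
have := leq_trans (mxrankS sW) (mxrankM_maxl _ _).
lia.
Qed.

Lemma saturated_additive_represent (V : A -> Prop) (phi : A -> int) :
  is_subgroup V -> saturated V -> additive_on V phi ->
  exists x, forall y, V y -> chi (y * x) = phi y.
Proof.
move=> subV satV phiB; have [psi psiB psiE] := saturated_additive_extend C subV satV phiB.
have [x Hx] := chi_represent psiB.
by exists x => y Vy; rewrite Hx psiE.
Qed.

Lemma perfect_on_perp (U U' V V' : A -> Prop) :
  is_subgroup U -> saturated U -> is_subgroup V -> saturated V ->
  (forall x, U' x -> U x) -> (forall y, V' y -> V y) ->
  (forall x, perp V' x -> U x) -> (forall x, perp V x -> U' x) ->
  (forall y, perp U' y -> V y) -> (forall y, perp U y -> V' y) ->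
  perfect_on (fun x y => chi (x * y)) U U' V V'.
Proof.
move=> subU satU subV satV sU'U sV'V perpV'U perpVU' perpU'V perpUV'; split.
- move=> phi phiB phiV'; have [x Hx] := saturated_additive_represent subV satV phiB.
  exists x; split => [|y Vy]; last by rewrite mulrC Hx.
  by apply: perpV'U => y V'y; rewrite Hx ?phiV' //; apply: sV'V.
- by move=> x _ x_perp; apply: perpVU' => y Vy; rewrite mulrC x_perp.
- move=> phi phiB phiU'; have [y Hy] := saturated_additive_represent subU satU phiB.
  exists y; split => //; apply: perpU'V => x U'x; rewrite Hy ?phiU' //.
  exact: sU'U.
- by move=> y _; apply: perpUV'.
Qed.

Section Filtration.
Variables (d : nat) (F : nat -> A -> Prop).
Hypothesis subF : forall i, is_subgroup (F i).
Hypothesis F0 : forall x, F 0%N x.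
Hypothesis FS : forall i x, F i.+1 x -> F i x.
Hypothesis Fd1 : forall x, F d.+1 x -> x = 0.
Hypothesis FM : forall (i j : nat) x y, F i x -> F j y -> F (i + j)%N (x * y).
Hypothesis gr_rank_sym : forall i, (i <= d)%N -> exists r : nat,
  quot_rank (F i) (F i.+1) r /\ quot_rank (F (d - i)%N) (F (d - i).+1) r.
Hypothesis satF : forall i, (i <= d)%N -> saturated (F i).

Lemma filtration_saturated k : (k <= d.+1)%N -> saturated (F k).
Proof.
rewrite leq_eqVlt => /predU1P [-> | /satF //] N x N_gt0 /Fd1 /(torsion_free C N_gt0) ->.
exact: subgroup0 (subF _).
Qed.

Lemma filtration_rank_compl k l q q' (M : 'M[int]_(q, n)) (M' : 'M[int]_(q', n)) :
  (k + l)%N = d.+1 -> spans C (F k) M -> spans C (F l) M' ->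
  (\rank (ratmx M) + \rank (ratmx M'))%N = n.
Proof.
elim: k l q M q' M' => [|k IH] l q M q' M' kl spanM spanM'.
  rewrite add0n in kl; rewrite kl in spanM'.
  by rewrite (spans_full_rank F0 spanM) (spans_zero_rank Fd1 spanM') addn0.
have [p [N spanN]] := spans_exists C (F k).
have [p' [N' spanN']] := spans_exists C (F l.+1).
have := IH l.+1 _ _ _ _ (etrans (addnS k l) kl) spanN spanN'.
have [r [gr_k gr_l]] := gr_rank_sym (leq_trans (leq_addr l k.+1) (eq_leq kl)).
rewrite (_ : (d - k)%N = l) in gr_l; last by lia.
have satSk : saturated (F k.+1) by apply: filtration_saturated; lia.
have satSl : saturated (F l.+1) by apply: filtration_saturated; lia.
have := quot_rank_spans (subF _) satSk (@FS k) spanN spanM gr_k.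
have := quot_rank_spans (subF _) satSl (@FS l) spanM' spanN' gr_l.
lia.
Qed.

Lemma filtration_perp k l : (k + l)%N = d.+1 -> forall y, perp (F k) y -> F l y.
Proof.
move=> kl y y_perp.
have [q [M spanM]] := spans_exists C (F k).
have [q' [M' spanM']] := spans_exists C (F l).
have [p [W spanW]] := spans_exists C (perp (F k)).
have Fl_perp x : F l x -> perp (F k) x.
  by move=> Flx u Fku; rewrite (Fd1 (x := u * x)) ?raddf0 // -kl; apply: FM.
have satl : saturated (F l) by apply: filtration_saturated; lia.
have satk : saturated (F k) by apply: filtration_saturated; lia.
apply: (saturated_spans_eq (subF l) satl Fl_perp spanM' spanW _ y_perp).
have := filtration_rank_compl kl spanM spanM'.
have := perp_rank_le (subF k) satk spanM.1 spanW.1.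
lia.
Qed.

Lemma filtration_perfect i : (i <= d)%N ->
  perfect_on (fun x y => chi (x * y)) (F i) (F i.+1) (F (d - i)%N) (F (d - i).+1).
Proof.
move=> le_id; apply: perfect_on_perp => //; try exact: FS.
- exact: satF.
- by apply: satF; rewrite leq_subr.
all: by apply: filtration_perp; lia.
Qed.

End Filtration.
End Duality.

Theorem lemma4p1 (A : comPzRingType) (chi : A -> int) (d : nat)
    (F : nat -> A -> Prop) :
  free_fg A ->
  (forall x y, chi (x + y) = chi x + chi y) ->
  perfect_on (fun x y => chi (x * y))
    (fun _ => True) (fun x => x = 0) (fun _ => True) (fun x => x = 0) ->
  (forall i, is_subgroup (F i)) ->
  (forall x, F 0%N x) ->
  (forall i x, F i.+1 x -> F i x) ->
  (forall x, F d.+1 x -> x = 0) ->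
  (forall (i j : nat) x y, F i x -> F j y -> F (i + j)%N (x * y)) ->
  (forall i, (i <= d)%N -> exists r : nat,
      quot_rank (F i) (F i.+1) r /\ quot_rank (F (d - i)%N) (F (d - i).+1) r) ->
  (forall i, (i <= d)%N -> forall (n : nat) (x : A),
      (0 < n)%N -> F i (x *+ n) -> F i x) ->
  forall i, (i <= d)%N ->
    perfect_on (fun x y => chi (x * y))
      (F i) (F i.+1) (F (d - i)%N) (F (d - i).+1).
Proof.
move=> /free_fg_coordinates [n [C]] chiD chi_unimodular subF F0 FS Fd1 FM gr_rank_sym satF.
move=> i le_id.
exact: (filtration_perfect C chiD chi_unimodular subF F0 FS Fd1 FM gr_rank_sym satF le_id).
Qed.
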